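(* In the setting below, any two correct sink members are intertwined: for all correct $i,j\in V_{\mathit{sink}}$ (possibly $i=j$), every quorum $Q$ of $i$ and every quorum $Q'$ of $j$ satisfy $|Q\cap Q'|>f$.
   Context: Processes and faults: $\Pi$ is a finite set of processes, $f\ge0$ a known integer; $W\subseteq\Pi$ is the set of correct processes and $F=\Pi\setminus W$ the Byzantine faulty processes, $|F|\le f$. Faulty processes may declare arbitrary slices. Slices and quorums: each process $i$ has a set $\mathcal{S}_i$ of slices (subsets of $\Pi$). $Q\subseteq\Pi$ is a quorum if every $i\in Q$ has some $S\in\mathcal{S}_i$ with $S\subseteq Q$; a quorum of $i$ is a quorum containing $i$. Two correct processes $i,j$ are intertwined if $|Q\cap Q'|>f$ for every quorum $Q$ of $i$ and every quorum $Q'$ of $j$. Knowledge graph: each process $i$ is given $\mathit{PD}_i\subseteq\Pi$; $G_{\mathit{di}}$ is the directed graph on $\Pi$ with edge $(i,j)$ iff $j\in\mathit{PD}_i$. A sink component is a strongly connected component of $G_{\mathit{di}}$ from which no path leads outside it. A directed graph is $k$-OSR if (1) its underlying undirected graph is connected; (2) its condensation into strongly connected components has exactly one sink $G_{\mathit{sink}}$; (3) $G_{\mathit{sink}}$ is $k$-strongly connected (every ordered pair of its nodes joined by $k$ node-disjoint directed paths); (4) from every node outside $G_{\mathit{sink}}$ to every node in it there are at least $k$ node-disjoint directed paths. Standing assumption: $G_{\mathit{di}}$ has a unique sink component with vertex set $V_{\mathit{sink}}$, which contains at least $2f+1$ correct processes, and the graph obtained from $G_{\mathit{di}}$ by deleting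 $F$ is $(f+1)$-OSR. Slice construction: let $m=\lceil (|V_{\mathit{sink}}|+f+1)/2\rceil$. Every correct $i\in V_{\mathit{sink}}$ has $\mathcal{S}_i=\{S\subseteq V_{\mathit{sink}}: |S|=m\}$. Every correct $i\notin V_{\mathit{sink}}$ is given a set $V_i\subseteq V_{\mathit{sink}}$ containing at least $f+1$ correct members of $V_{\mathit{sink}}$, and has $\mathcal{S}_i=\{S\subseteq V_i: |S|=f+1\}$. *)

From mathcomp Require Import all_boot.
Set Implicit Arguments. Unset Strict Implicit. Unset Printing Implicit Defensive.

Section Defs.
Variable T : finType.

Definition is_quorum (S : T -> {set {set T}}) (Q : {set T}) : Prop :=
  forall i, i \in Q -> exists2 s, s \in S i & s \subset Q.

Definition quorum_of (S : T -> {set {set T}}) (i : T) (Q : {set T}) : Prop :=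
  is_quorum S Q /\ i \in Q.

Definition intertwined (S : T -> {set {set T}}) (f : nat) (i j : T) : Prop :=
  forall Q Q', quorum_of S i Q -> quorum_of S j Q' -> f < #|Q :&: Q'|.

Definition rV (V : {set T}) (e : rel T) : rel T :=
  fun a b => [&& a \in V, b \in V & e a b].

Definition reach (V : {set T}) (e : rel T) (x y : T) : bool :=
  connect (rV V e) x y.

Definition und_connected (V : {set T}) (e : rel T) : Prop :=
  forall x y, x \in V -> y \in V ->
    connect (fun a b => rV V e a b || rV V e b a) x y.

Definition is_scc (V : {set T}) (e : rel T) (C : {set T}) : Prop :=
  exists2 x, x \in V &
    C = [set y in V | reach V e x y && reach V e y x].

Definition is_sink_comp (V : {set T}) (e : rel T) (C : {set T}) : Prop :=
  is_scc V e C /\ (forall x y, x \in C -> rV V e x y -> y \in C).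

Definition dpath (V : {set T}) (e : rel T) (x y : T) (p : seq T) : bool :=
  [&& x \in V, path (rV V e) x p, last x p == y & uniq (x :: p)].

Definition internal (y : T) (p : seq T) : {set T} :=
  [set v | (v \in p) && (v != y)].

Definition k_disjoint_paths (V : {set T}) (e : rel T) (k : nat) (x y : T) : Prop :=
  exists ps : seq (seq T),
    [/\ size ps = k,
        (forall p, p \in ps -> dpath V e x y p) &
        (forall a b, a < k -> b < k -> a != b ->
           nth [::] ps a != nth [::] ps b /\
           [disjoint internal y (nth [::] ps a) & internal y (nth [::] ps b)])].

Definition k_strongly_connected (V : {set T}) (e : rel T) (k : nat) : Prop :=
  forall x y, x \in V -> y \in V -> x != y -> k_disjoint_paths V e k x y.

Definition k_OSR (V : {set T}) (e : rel T) (k : nat) : Prop :=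
  und_connected V e /\
  exists Cs : {set T},
    [/\ is_sink_comp V e Cs,
        (forall C, is_sink_comp V e C -> C = Cs),
        k_strongly_connected Cs e k &
        (forall x y, x \in V :\: Cs -> y \in Cs -> k_disjoint_paths V e k x y)].

Definition Gdi (PD : T -> {set T}) : rel T := fun i j => j \in PD i.

End Defs.

(** Each of the two quorums contains a slice of its (correct, sink) member,
    i.e. a subset of [Vsink] of size m = ⌈(|Vsink| + f + 1) / 2⌉.  Two such
    subsets of an n-element set share at least 2m - n >= f + 1 elements.
    Only the slices of sink members matter here. *)

From mathcomp Require Import all_boot.
From mathcomp Require Import zify.

Set Implicit Arguments.
Unset Strict Implicit.
Unset Printing Implicit Defensive.

Section MajoritySubsets.
Variable T : finType.

Lemma leq_card_setI (V A B : {set T}) :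
  A \subset V -> B \subset V -> #|A| + #|B| <= #|V| + #|A :&: B|.
Proof.
by move=> AV BV; rewrite -cardsUI leq_add2r subset_leq_card // subUset AV.
Qed.

Lemma majority_subsets_meet (V A B : {set T}) (f : nat) :
    A \subset V -> B \subset V ->
    #|A| = uphalf (#|V| + f + 1) -> #|B| = uphalf (#|V| + f + 1) ->
  f < #|A :&: B|.
Proof.
move=> AV BV cardA cardB.
have cardAB := leq_card_setI AV BV.
have double_m : #|V| + f + 1 <= (uphalf (#|V| + f + 1)).*2.
  by rewrite -leq_uphalf_double.
lia.
Qed.

End MajoritySubsets.

Theorem lemma3 (T : finType) (f : nat) (W : {set T}) (S : T -> {set {set T}})
    (PD : T -> {set T}) (Vsink : {set T})
    (* at most f Byzantine (faulty) processes F = ~: W *)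
    (hF : #|~: W| <= f)
    (* Vsink is the unique sink component of G_di *)
    (hsink : is_sink_comp [set: T] (Gdi PD) Vsink)
    (hsink_uniq : forall C, is_sink_comp [set: T] (Gdi PD) C -> C = Vsink)
    (hsink_correct : 2 * f + 1 <= #|Vsink :&: W|)
    (* G_di with F deleted is (f+1)-OSR *)
    (hOSR : k_OSR W (Gdi PD) f.+1)
    (* slices of correct sink members: all m-subsets of Vsink,
       m = ceil((|Vsink| + f + 1) / 2) *)
    (hS_sink : forall i, i \in W -> i \in Vsink ->
       S i = [set s : {set T} | (s \subset Vsink) &&
                 (#|s| == (#|Vsink| + f + 1).+1 %/ 2)])
    (* slices of correct non-sink members *)
    (hS_out : forall i, i \in W -> i \notin Vsink ->
       exists Vi : {set T}, [/\ Vi \subset Vsink, f.+1 <= #|Vi :&: W| &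
         S i = [set s : {set T} | (s \subset Vi) && (#|s| == f.+1)]]) :
  forall i j, i \in W :&: Vsink -> j \in W :&: Vsink -> intertwined S f i j.
Proof.
move=> i j /setIP[iW iV] /setIP[jW jV] Q Q' [qQ iQ] [qQ' jQ].
have [s si sQ] := qQ i iQ.
have [s' s'j s'Q'] := qQ' j jQ.
move: si s'j; rewrite hS_sink // hS_sink // !inE divn2 -uphalfE.
move=> /andP[sV /eqP cards] /andP[s'V /eqP cards'].
apply: leq_trans (majority_subsets_meet sV s'V cards cards') _.
exact/subset_leq_card/setISS.
Qed.
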